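(* Let $s>2$ be an integer, $A_s=\{0,1,\dots,s-1\}$, and let $A_0,A_1$ be disjoint subsets of $A_s$ with $A_0\cup A_1=A_s$, $A_0\neq A_s\neq A_1$. Let $f:[0,1]\to[0,1]$ be defined by $$f\big(\Delta^{s*}_{\alpha_1\alpha_2\dots\alpha_n\dots}\big)=\Delta^{2*}_{\beta_1\beta_2\dots\beta_n\dots},$$ where $\beta_1=0$ if $\alpha_1\in A_0$, $\beta_1=1$ if $\alpha_1\in A_1$, and for $n\ge 1$, $\beta_{n+1}=\beta_n$ if $\alpha_{n+1}=\alpha_n$ and $\beta_{n+1}=1-\beta_n$ if $\alpha_{n+1}\neq\alpha_n$. Then $f$ is nowhere monotonic: there is no open interval $(a,b)\subset[0,1]$ on which $f$ is monotone.
   Context: $L_s=A_s\times A_s\times\cdots$ denotes the space of sequences $(\alpha_n)$ with $\alpha_n\in A_s$. The $s*$-representation is an encoding of $[0,1]$ topologically equivalent to the classical $s$-adic one: there is a continuous strictly monotone surjection $h_s:[0,1]\to[0,1]$ such that $\Delta^{s*}_{\alpha_1\alpha_2\dots}=h_s\big(\sum_{n\ge1}\alpha_n s^{-n}\big)$ for every $(\alpha_n)\in L_s$. Likewise the $2*$-representation is given by a continuous strictly monotone surjection $h_2:[0,1]\to[0,1]$ via $\Delta^{2*}_{\beta_1\beta_2\dots}=h_2\big(\sum_{n\ge1}\beta_n 2^{-n}\big)$, $\beta_n\in\{0,1\}$. The value of $f(x)$ given by the formula does not depend on which $s*$-code of $x$ is used, so $f$ is a well-defined function on $[0,1]$. 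*)

From Stdlib Require Import Reals.
From Coquelicot Require Import Coquelicot.
Open Scope R_scope.

(* Digit sequences are indexed from 0: alpha 0 is the paper's alpha_1, etc. *)

Definition sadic (s : nat) (alpha : nat -> nat) : R :=
  Series (fun n => INR (alpha n) / (INR s) ^ (S n)).

Definition binval (beta : nat -> nat) : R :=
  Series (fun n => INR (beta n) / 2 ^ (S n)).

Fixpoint beta (A1 : nat -> bool) (alpha : nat -> nat) (n : nat) : nat :=
  match n with
  | O => if A1 (alpha O) then 1%nat else 0%nat
  | S m => if Nat.eqb (alpha (S m)) (alpha m) then beta A1 alpha m
           else (1 - beta A1 alpha m)%nat
  end.

Definition in01 (x : R) : Prop := 0 <= x <= 1.

Definition cont_strict_mono_surj01 (h : R -> R) : Prop :=
  (forall x, in01 x -> filterlim h (within in01 (locally x)) (locally (h x))) /\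
  ((forall x y, in01 x -> in01 y -> x < y -> h x < h y) \/
   (forall x y, in01 x -> in01 y -> x < y -> h y < h x)) /\
  (forall x, in01 x -> in01 (h x)) /\
  (forall y, in01 y -> exists x, in01 x /\ h x = y).

Definition monotone_on_open (f : R -> R) (a b : R) : Prop :=
  (forall x y, a < x -> x <= y -> y < b -> f x <= f y) \/
  (forall x y, a < x -> x <= y -> y < b -> f y <= f x).

From Stdlib Require Import Reals Lra Lia.
From Coquelicot Require Import Coquelicot.
Open Scope R_scope.

(* Through the homeomorphism h_s, every interval (a, b) contains the image of a
   whole s-adic cylinder.  Inside it take the three codes
   alpha_0 ... alpha_N 1 c c c ... with c = 0, 1, 2 (this is where s > 2 is
   used); their values increase with c.  The binary code beta only records
   where consecutive digits change, and the codes with c = 0 and c = 2 change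
   at the same places, so f agrees at the two outer points, whereas for c = 1
   the binary tail is the constant b instead of 1 - b, so f differs at the
   middle point; no monotone function does this. *)

Section DigitSeries.

Variable x : R.
Hypothesis x_gt1 : 1 < x.

Lemma is_series_const_digit (c : R) :
  is_series (fun n => c / x ^ S n) (c / (x - 1)).
Proof.
  apply is_series_ext with (fun n => scal (c / x) ((/ x) ^ n)).
  { intros n. unfold scal; simpl; unfold mult; simpl. rewrite pow_inv.
    field. repeat split; try apply pow_nonzero; lra. }
  replace (c / (x - 1)) with (scal (c / x) (/ (1 - / x)))
    by (unfold scal; simpl; unfold mult; simpl; field; lra).
  apply (@is_series_scal_l R_AbsRing R_NormedModule), is_series_geom.
  rewrite Rabs_pos_eq by (left; apply Rinv_0_lt_compat; lra).
  rewrite <- Rinv_1. apply Rinv_lt_contravar; lra.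
Qed.

Lemma is_series_eventually_const (a : nat -> R) (c : R) (M : nat) :
  (forall n, (M < n)%nat -> a n = c) ->
  is_series (fun n => a n / x ^ S n)
    (sum_n (fun n => a n / x ^ S n) M + c / ((x - 1) * x ^ S M)).
Proof.
  intros a_const. apply (is_series_decr_n _ (S M)); [lia|]. simpl pred.
  apply is_series_ext with (fun k => scal (/ x ^ S M) (c / x ^ S k)).
  { intros k. rewrite a_const by lia.
    replace (S (S M + k)) with (S M + S k)%nat by lia. rewrite pow_add.
    unfold scal; simpl; unfold mult; simpl.
    field. repeat split; try apply pow_nonzero; lra. }
  replace (plus _ _) with (scal (/ x ^ S M) (c / (x - 1))).
  - apply (@is_series_scal_l R_AbsRing R_NormedModule), is_series_const_digit.
  - unfold scal, plus, opp; simpl; unfold mult; simpl.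
    (* The two [sum_n] differ only by convertible structure instances,
       which [field] would treat as distinct atoms. *)
    match goal with |- _ = ?p + _ + - ?q => change q with p end.
    field. repeat split; try apply pow_nonzero; lra.
Qed.

Lemma digit_series_in01 (a : nat -> R) :
  (forall n, 0 <= a n <= x - 1) -> in01 (Series (fun n => a n / x ^ S n)).
Proof.
  intros a_digit.
  assert (term_bounds : forall n, 0 <= a n / x ^ S n <= (x - 1) / x ^ S n).
  { intros n. assert (0 < / x ^ S n) by (apply Rinv_0_lt_compat, pow_lt; lra).
    unfold Rdiv. specialize (a_digit n). split; nra. }
  assert (zero_series : Series (fun n => 0 / x ^ S n) = 0).
  { rewrite (is_series_unique _ _ (is_series_const_digit 0)). field. lra. }
  assert (one_series : is_series (fun n => (x - 1) / x ^ S n) 1).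
  { assert (geom := is_series_const_digit (x - 1)).
    replace ((x - 1) / (x - 1)) with 1 in geom by (field; lra). exact geom. }
  assert (ex_a : ex_series (fun n => a n / x ^ S n)).
  { apply (@ex_series_le R_AbsRing R_CompleteNormedModule _ (fun n => (x - 1) / x ^ S n)).
    2: exists 1; exact one_series.
    intros n. unfold norm; simpl. rewrite Rabs_pos_eq; apply term_bounds. }
  split.
  - rewrite <- zero_series. apply Series_le; [|exact ex_a].
    intros n. unfold Rdiv. rewrite Rmult_0_l. split; [lra|apply term_bounds].
  - rewrite <- (is_series_unique _ _ one_series).
    apply Series_le; [apply term_bounds|exists 1; exact one_series].
Qed.

End DigitSeries.

Definition strictly_monotone01 (h : R -> R) : Prop :=
  (forall x y, in01 x -> in01 y -> x < y -> h x < h y) \/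
  (forall x y, in01 x -> in01 y -> x < y -> h y < h x).

Section StrictlyMonotone01.

Variable h : R -> R.
Hypothesis h_mono : strictly_monotone01 h.

Lemma strictly_monotone01_inj (u v : R) :
  in01 u -> in01 v -> h u = h v -> u = v.
Proof.
  intros u01 v01 huv.
  destruct (Rtotal_order u v) as [uv|[uv|uv]]; [|exact uv|];
    destruct h_mono as [inc|dec];
    first [specialize (inc _ _ u01 v01 uv) | specialize (dec _ _ u01 v01 uv)
          | specialize (inc _ _ v01 u01 uv) | specialize (dec _ _ v01 u01 uv)]; lra.
Qed.

Lemma strictly_monotone01_between (u v w : R) :
  in01 u -> in01 w -> u <= v <= w ->
  (h u <= h v <= h w) \/ (h w <= h v <= h u).
Proof.
  intros u01 w01 uvw.
  assert (v01 : in01 v) by (unfold in01 in *; lra).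
  destruct h_mono as [inc|dec]; [left|right];
    destruct uvw as [[uv|<-] [vw|<-]];
    first [pose proof (inc _ _ u01 v01 uv) | pose proof (dec _ _ u01 v01 uv) | idtac];
    first [pose proof (inc _ _ v01 w01 vw) | pose proof (dec _ _ v01 w01 vw) | idtac]; lra.
Qed.

Lemma strictly_monotone01_interval_preimage (a b : R) :
  (forall y, in01 y -> exists x, in01 x /\ h x = y) ->
  0 <= a -> a < b -> b <= 1 ->
  exists p q, 0 <= p /\ p < q /\ q <= 1 /\ forall u, p <= u <= q -> a < h u < b.
Proof.
  intros h_surj a0 ab b1.
  destruct (h_surj ((2 * a + b) / 3)) as [t1 [t1_01 ht1]]; [unfold in01; lra|].
  destruct (h_surj ((a + 2 * b) / 3)) as [t2 [t2_01 ht2]]; [unfold in01; lra|].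
  assert (inside : forall p q, in01 p -> in01 q -> a < h p < b -> a < h q < b ->
                   forall u, p <= u <= q -> a < h u < b).
  { intros p q p01 q01 hp hq u pu.
    destruct (strictly_monotone01_between p u q p01 q01 pu); lra. }
  unfold in01 in *.
  destruct (Rtotal_order t1 t2) as [t12|[t12|t12]].
  - exists t1, t2. do 3 (split; [lra|]). apply inside; unfold in01; lra.
  - subst. lra.
  - exists t2, t1. do 3 (split; [lra|]). apply inside; unfold in01; lra.
Qed.

End StrictlyMonotone01.

Lemma monotone_on_open_between (f : R -> R) (a b u v w : R) :
  monotone_on_open f a b -> a < u < b -> a < w < b ->
  (u <= v <= w \/ w <= v <= u) -> f u = f w -> f v = f u.
Proof.
  intros [up|down] u_ab w_ab uvw fuw;
    destruct uvw as [[uv vw]|[wv vu]];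
    [ assert (f u <= f v) by (apply up; lra); assert (f v <= f w) by (apply up; lra)
    | assert (f w <= f v) by (apply up; lra); assert (f v <= f u) by (apply up; lra)
    | assert (f v <= f u) by (apply down; lra); assert (f w <= f v) by (apply down; lra)
    | assert (f u <= f v) by (apply down; lra); assert (f v <= f w) by (apply down; lra) ];
    lra.
Qed.

Definition sadic_prefix (s : nat) (alpha : nat -> nat) (N : nat) : R :=
  sum_n (fun n => INR (alpha n) / INR s ^ S n) N.

Definition cylinder_code (alpha : nat -> nat) (N c : nat) (n : nat) : nat :=
  if (n <=? N)%nat then alpha n else if (n =? S N)%nat then 1%nat else c.

Lemma cylinder_code_prefix (alpha : nat -> nat) (N c n : nat) :
  (n <= N)%nat -> cylinder_code alpha N c n = alpha n.
Proof. intros nN. unfold cylinder_code. now replace (n <=? N)%nat with true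
  by (symmetry; apply Nat.leb_le; lia). Qed.

Lemma cylinder_code_marker (alpha : nat -> nat) (N c : nat) :
  cylinder_code alpha N c (S N) = 1%nat.
Proof. unfold cylinder_code. replace (S N <=? N)%nat with false
  by (symmetry; apply Nat.leb_gt; lia). now rewrite Nat.eqb_refl. Qed.

Lemma cylinder_code_tail (alpha : nat -> nat) (N c n : nat) :
  (S N < n)%nat -> cylinder_code alpha N c n = c.
Proof. intros nN. unfold cylinder_code.
  replace (n <=? N)%nat with false by (symmetry; apply Nat.leb_gt; lia).
  now replace (n =? S N)%nat with false by (symmetry; apply Nat.eqb_neq; lia). Qed.

Section SAdicApproximation.

Variable s : nat.
Hypothesis s_gt1 : (1 < s)%nat.

Let s_pos : 1 < INR s.
Proof. apply lt_1_INR; exact s_gt1. Qed.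

Lemma next_sadic_digit (P t : R) (M : nat) :
  P <= t < P + / INR s ^ M ->
  exists k, (k < s)%nat /\
    P + INR k / INR s ^ S M <= t < P + INR k / INR s ^ S M + / INR s ^ S M.
Proof.
  intros Pt.
  set (X := INR s ^ S M).
  assert (X_pos : 0 < X) by (apply pow_lt; lra).
  assert (X_eq : X = INR s * INR s ^ M) by reflexivity.
  assert (sM_pos : 0 < INR s ^ M) by (apply pow_lt; lra).
  set (y := (t - P) * X).
  assert (y_ge0 : 0 <= y) by (unfold y; apply Rmult_le_pos; lra).
  assert (y_lt_s : y < INR s).
  { assert (scaled : (t - P) * INR s ^ M < 1).
    { replace 1 with (/ INR s ^ M * INR s ^ M) by (field; lra).
      apply Rmult_lt_compat_r; lra. }
    unfold y. rewrite X_eq. nra. }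
  destruct (nfloor_ex y y_ge0) as [k [ky yk]].
  exists k. split; [apply INR_lt; lra|].
  assert (tP : t - P = y / X) by (unfold y; field; lra).
  assert (k_le : INR k / X <= y / X)
    by (apply Rmult_le_compat_r; [left; apply Rinv_0_lt_compat|]; lra).
  assert (k_lt : y / X < INR k / X + / X).
  { replace (INR k / X + / X) with ((INR k + 1) / X) by (field; lra).
    apply Rmult_lt_compat_r; [apply Rinv_0_lt_compat|]; lra. }
  lra.
Qed.

Lemma sadic_prefix_approx (t : R) :
  0 <= t < 1 -> forall N, exists alpha, (forall n, (alpha n < s)%nat) /\
    sadic_prefix s alpha N <= t < sadic_prefix s alpha N + / INR s ^ S N.
Proof.
  intros t01 N. induction N as [|N [alpha [alpha_digits approx]]].
  - destruct (next_sadic_digit 0 t 0) as [k [ks approx]].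
    { simpl. rewrite Rinv_1. lra. }
    exists (fun _ => k). split; [intros; exact ks|].
    unfold sadic_prefix. rewrite sum_O. lra.
  - destruct (next_sadic_digit _ t _ approx) as [k [ks approx']].
    exists (fun n => if (n <=? N)%nat then alpha n else k). split.
    + intros n. destruct (n <=? N)%nat; auto.
    + unfold sadic_prefix in *. rewrite sum_Sn.
      rewrite (sum_n_ext_loc _ (fun n => INR (alpha n) / INR s ^ S n)).
      2: { intros n nN. apply Nat.leb_le in nN. now rewrite nN. }
      replace (S N <=? N)%nat with false by (symmetry; apply Nat.leb_gt; lia).
      exact approx'.
Qed.

Lemma sadic_cylinder_in_interval (p q : R) :
  0 <= p -> p < q -> q <= 1 ->
  exists alpha N, (forall n, (alpha n < s)%nat) /\
    p <= sadic_prefix s alpha N /\ sadic_prefix s alpha N + / INR s ^ S N <= q.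
Proof.
  intros p0 pq q1.
  destruct (pow_lt_1_zero (/ INR s)) with ((q - p) / 2) as [N small].
  { rewrite Rabs_pos_eq by (left; apply Rinv_0_lt_compat; lra).
    rewrite <- Rinv_1. apply Rinv_lt_contravar; lra. }
  { lra. }
  specialize (small (S N) ltac:(lia)).
  rewrite pow_inv, Rabs_pos_eq in small by (left; apply Rinv_0_lt_compat, pow_lt; lra).
  destruct (sadic_prefix_approx ((p + q) / 2) ltac:(lra) N) as [alpha [digits approx]].
  exists alpha, N. repeat split; try lra; auto.
Qed.

Lemma cylinder_code_digits (alpha : nat -> nat) (N c : nat) :
  (forall n, (alpha n < s)%nat) -> (c < s)%nat ->
  forall n, (cylinder_code alpha N c n < s)%nat.
Proof.
  intros alpha_digits cs n. unfold cylinder_code.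
  destruct (n <=? N)%nat; [|destruct (n =? S N)%nat]; auto.
Qed.

Lemma sadic_cylinder_code (alpha : nat -> nat) (N c : nat) :
  sadic s (cylinder_code alpha N c) =
  sadic_prefix s alpha N + (1 + INR c / (INR s - 1)) / INR s ^ S (S N).
Proof.
  assert (tail : forall n, (S N < n)%nat -> INR (cylinder_code alpha N c n) = INR c)
    by (intros n nN; now rewrite cylinder_code_tail).
  unfold sadic.
  rewrite (is_series_unique _ _ (is_series_eventually_const _ s_pos _ _ _ tail)).
  rewrite sum_Sn, cylinder_code_marker.
  rewrite (sum_n_ext_loc _ (fun n => INR (alpha n) / INR s ^ S n))
    by (intros n nN; now rewrite cylinder_code_prefix).
  unfold sadic_prefix, plus. simpl.
  match goal with |- ?p + _ + _ = ?q + _ => change q with p end.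
  field. repeat split; try apply pow_nonzero; lra.
Qed.

Lemma sadic_cylinder_code_le (alpha : nat -> nat) (N c c' : nat) :
  (c <= c')%nat -> (c' < s)%nat ->
  sadic_prefix s alpha N <= sadic s (cylinder_code alpha N c) /\
  sadic s (cylinder_code alpha N c) <= sadic s (cylinder_code alpha N c') /\
  sadic s (cylinder_code alpha N c') <= sadic_prefix s alpha N + / INR s ^ S N.
Proof.
  intros cc' c's. rewrite !sadic_cylinder_code.
  assert (c_le : INR c <= INR c') by (apply le_INR; exact cc').
  assert (c'_le : INR (S c') <= INR s) by (apply le_INR; lia).
  rewrite S_INR in c'_le.
  assert (c_ge0 : 0 <= INR c) by apply pos_INR.
  assert (tail_c : INR c / (INR s - 1) <= INR c' / (INR s - 1))
    by (apply Rmult_le_compat_r; [left; apply Rinv_0_lt_compat|]; lra).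
  assert (tail_c' : INR c' / (INR s - 1) <= 1)
    by (apply Rmult_le_reg_r with (INR s - 1); [lra|]; field_simplify; lra).
  assert (tail_c0 : 0 <= INR c / (INR s - 1))
    by (apply Rdiv_le_0_compat; lra).
  set (X := INR s ^ S N).
  assert (X_pos : 0 < X) by (apply pow_lt; lra).
  change (INR s ^ S (S N)) with (INR s * X).
  assert (last : forall q, 0 <= q <= 1 -> 0 <= (1 + q) / (INR s * X) <= / X).
  { intros q q01. split.
    - apply Rdiv_le_0_compat; nra.
    - apply Rmult_le_reg_r with (INR s * X); [nra|].
      field_simplify; try lra. assert (2 <= INR s) by (apply (le_INR 2); lia). nra. }
  assert (mono : (1 + INR c / (INR s - 1)) / (INR s * X) <=
                 (1 + INR c' / (INR s - 1)) / (INR s * X))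
    by (apply Rmult_le_compat_r; [left; apply Rinv_0_lt_compat; nra|]; lra).
  destruct (last (INR c / (INR s - 1))); [lra|].
  destruct (last (INR c' / (INR s - 1))); [lra|].
  lra.
Qed.

End SAdicApproximation.

Section BinaryCode.

Variable A1 : nat -> bool.

Lemma beta_le_1 (alpha : nat -> nat) (n : nat) : (beta A1 alpha n <= 1)%nat.
Proof.
  induction n as [|n IH]; cbn [beta].
  - destruct (A1 (alpha 0%nat)); lia.
  - destruct (alpha (S n) =? alpha n)%nat; lia.
Qed.

Lemma beta_ext (alpha alpha' : nat -> nat) (n : nat) :
  (forall k, (k <= n)%nat -> alpha k = alpha' k) ->
  beta A1 alpha n = beta A1 alpha' n.
Proof.
  induction n as [|n IH]; intros same; simpl.
  - now rewrite same by lia.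
  - rewrite IH by (intros; apply same; lia).
    now rewrite (same (S n)), (same n) by lia.
Qed.

Lemma beta_eq_of_same_changes (alpha alpha' : nat -> nat) :
  A1 (alpha 0%nat) = A1 (alpha' 0%nat) ->
  (forall n, (alpha (S n) =? alpha n)%nat = (alpha' (S n) =? alpha' n)%nat) ->
  forall n, beta A1 alpha n = beta A1 alpha' n.
Proof.
  intros same0 same_changes n. induction n as [|n IH]; simpl.
  - now rewrite same0.
  - now rewrite same_changes, IH.
Qed.

Lemma beta_stationary (alpha : nat -> nat) (M : nat) :
  (forall n, (M <= n)%nat -> alpha (S n) = alpha n) ->
  forall n, (M <= n)%nat -> beta A1 alpha n = beta A1 alpha M.
Proof.
  intros stat n Mn. induction Mn as [|n Mn IH]; [reflexivity|].
  simpl. now rewrite stat, Nat.eqb_refl by exact Mn.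
Qed.

Lemma binval_in01 (alpha : nat -> nat) : in01 (binval (beta A1 alpha)).
Proof.
  apply digit_series_in01; [lra|]. intros n. split; [apply pos_INR|].
  replace (2 - 1) with (INR 1) by (simpl; lra). apply le_INR, beta_le_1.
Qed.

Lemma beta_cylinder_code_off_1 (alpha : nat -> nat) (N c c' : nat) :
  c <> 1%nat -> c' <> 1%nat ->
  forall n, beta A1 (cylinder_code alpha N c) n = beta A1 (cylinder_code alpha N c') n.
Proof.
  intros c1 c'1. apply beta_eq_of_same_changes; [reflexivity|].
  intros n. unfold cylinder_code.
  destruct (Nat.leb_spec (S n) N), (Nat.leb_spec n N); try lia.
  - reflexivity.
  - now replace (S n =? S N)%nat with true by (symmetry; apply Nat.eqb_eq; lia).
  - replace (S n =? S N)%nat with false by (symmetry; apply Nat.eqb_neq; lia).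
    destruct (Nat.eqb_spec n (S N)).
    + destruct (Nat.eqb_spec c 1), (Nat.eqb_spec c' 1); congruence.
    + now rewrite !Nat.eqb_refl.
Qed.

Lemma binval_cylinder_code_1_0 (alpha : nat -> nat) (N : nat) :
  binval (beta A1 (cylinder_code alpha N 1)) <> binval (beta A1 (cylinder_code alpha N 0)).
Proof.
  set (code := cylinder_code alpha N).
  set (b := beta A1 (code 1%nat) (S N)).
  assert (same_prefix : forall c n, (n <= S N)%nat ->
            beta A1 (code c) n = beta A1 (code 1%nat) n).
  { intros c n nN. apply beta_ext. intros k kn. unfold code.
    destruct (Nat.leb_spec k N).
    - now rewrite !cylinder_code_prefix.
    - replace k with (S N) by lia. now rewrite !cylinder_code_marker. }
  assert (tail1 : forall n, (S N < n)%nat -> INR (beta A1 (code 1%nat) n) = INR b).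
  { intros n nN. f_equal. apply beta_stationary; [|lia].
    intros k kN. unfold code. rewrite cylinder_code_tail by lia.
    destruct (Nat.eq_dec k (S N)) as [->|].
    - now rewrite cylinder_code_marker.
    - now rewrite cylinder_code_tail by lia. }
  assert (tail0 : forall n, (S N < n)%nat -> INR (beta A1 (code 0%nat) n) = INR (1 - b)).
  { intros n nN. f_equal.
    rewrite (beta_stationary (code 0%nat) (S (S N))); [| |lia].
    2: intros k kN; unfold code; now rewrite !cylinder_code_tail by lia.
    change (beta A1 (code 0%nat) (S (S N))) with
      (if (code 0%nat (S (S N)) =? code 0%nat (S N))%nat then beta A1 (code 0%nat) (S N)
       else (1 - beta A1 (code 0%nat) (S N))%nat).
    unfold code. rewrite cylinder_code_tail, cylinder_code_marker by lia.
    now rewrite same_prefix. }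
  unfold binval.
  rewrite (is_series_unique _ _ (is_series_eventually_const 2 ltac:(lra) _ _ _ tail1)).
  rewrite (is_series_unique _ _ (is_series_eventually_const 2 ltac:(lra) _ _ _ tail0)).
  rewrite (sum_n_ext_loc (fun n => INR (beta A1 (code 0%nat) n) / 2 ^ S n)
             (fun n => INR (beta A1 (code 1%nat) n) / 2 ^ S n))
    by (intros n nN; now rewrite same_prefix).
  assert (0 < 2 ^ S (S N)) by (apply pow_lt; lra).
  intros eq_binval.
  assert (same_tail : INR b = INR (1 - b)).
  { apply Rmult_eq_reg_r with (/ ((2 - 1) * 2 ^ S (S N))); [|apply Rinv_neq_0_compat; lra].
    unfold Rdiv in eq_binval. lra. }
  apply INR_eq in same_tail.
  assert (b_le : (b <= 1)%nat) by apply beta_le_1.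
  lia.
Qed.

Lemma binval_cylinder_code_off_1 (alpha : nat -> nat) (N c c' : nat) :
  c <> 1%nat -> c' <> 1%nat ->
  binval (beta A1 (cylinder_code alpha N c)) = binval (beta A1 (cylinder_code alpha N c')).
Proof.
  intros c1 c'1. unfold binval. apply Series_ext. intros n.
  now rewrite (beta_cylinder_code_off_1 alpha N c c').
Qed.

End BinaryCode.

Theorem theorem3
  (s : nat) (hs2 : (2 < s)%nat)
  (A0 A1 : nat -> bool)
  (hA0s : forall d, A0 d = true -> (d < s)%nat)
  (hA1s : forall d, A1 d = true -> (d < s)%nat)
  (hdisj : forall d, ~ (A0 d = true /\ A1 d = true))
  (hcover : forall d, (d < s)%nat -> A0 d = true \/ A1 d = true)
  (hA0prop : exists d, (d < s)%nat /\ A0 d = false)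
  (hA1prop : exists d, (d < s)%nat /\ A1 d = false)
  (h_s h_2 : R -> R)
  (Hs : cont_strict_mono_surj01 h_s)
  (H2 : cont_strict_mono_surj01 h_2)
  (f : R -> R)
  (Hf : forall alpha : nat -> nat, (forall n, (alpha n < s)%nat) ->
          f (h_s (sadic s alpha)) = h_2 (binval (beta A1 alpha))) :
  ~ (exists a b, 0 <= a /\ a < b /\ b <= 1 /\ monotone_on_open f a b).
Proof.
  intros [a [b [a0 [ab [b1 f_mono]]]]].
  destruct Hs as [_ [hs_mono [_ hs_surj]]].
  destruct H2 as [_ [h2_mono _]].
  destruct (strictly_monotone01_interval_preimage h_s hs_mono a b hs_surj a0 ab b1)
    as [p [q [p0 [pq [q1 hs_ab]]]]].
  destruct (sadic_cylinder_in_interval s ltac:(lia) p q p0 pq q1)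
    as [alpha [N [alpha_digits [p_le le_q]]]].
  set (u c := sadic s (cylinder_code alpha N c)).
  destruct (sadic_cylinder_code_le s ltac:(lia) alpha N 0 1) as [u0_ge [u01 _]]; try lia.
  destruct (sadic_cylinder_code_le s ltac:(lia) alpha N 1 2) as [_ [u12 u2_le]]; try lia.
  assert (u0_01 : in01 (u 0%nat)) by (unfold u, in01; lra).
  assert (u2_01 : in01 (u 2%nat)) by (unfold u, in01; lra).
  assert (f_eq : f (h_s (u 0%nat)) = f (h_s (u 2%nat))).
  { unfold u. rewrite !Hf by (apply cylinder_code_digits; auto; lia).
    now rewrite (binval_cylinder_code_off_1 A1 alpha N 0 2). }
  assert (f_neq : f (h_s (u 1%nat)) <> f (h_s (u 0%nat))).
  { unfold u. rewrite !Hf by (apply cylinder_code_digits; auto; lia).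
    intros h2_eq. apply strictly_monotone01_inj in h2_eq; try apply binval_in01; auto.
    exact (binval_cylinder_code_1_0 A1 alpha N h2_eq). }
  apply f_neq, (monotone_on_open_between f a b _ _ (h_s (u 2%nat))); auto.
  - apply hs_ab. unfold u. lra.
  - apply hs_ab. unfold u. lra.
  - apply (strictly_monotone01_between h_s hs_mono); auto.
Qed.
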